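(* Let $k\ge1$ be an integer. The set $N^{(-)}_k=\{s\in S(\theta): \lfloor k\theta\rfloor\le s\le k\theta\}$ is invariant under $s\mapsto \lfloor k\theta\rfloor+k\theta-s$, and the set $N^{(+)}_k=\{s\in S(\theta): \lfloor k/\theta\rfloor\theta\le s\le k\}$ is invariant under $s\mapsto \lfloor k/\theta\rfloor\theta+k-s$. Consequently, listing the elements of either set in increasing order, the sequence of consecutive differences is a palindrome.
   Context: Fix an irrational $\theta$ with $1<\theta<2$ and let $S(\theta)=\{i+j\theta : i,j\in\mathbb{N}_0\}$. *)

From Stdlib Require Import Reals List Sorting.Sorted.
Open Scope R_scope.

Definition irrational (x : R) : Prop :=
  ~ exists p q : Z, q <> 0%Z /\ x = IZR p / IZR q.

(* floor function: Int_part x = up x - 1 is the floor of x. *)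
Definition Rfloor (x : R) : R := IZR (Int_part x).

Definition inS (theta s : R) : Prop :=
  exists i j : nat, s = INR i + INR j * theta.

Definition Nminus (theta : R) (k : nat) (s : R) : Prop :=
  inS theta s /\ Rfloor (INR k * theta) <= s <= INR k * theta.

Definition Nplus (theta : R) (k : nat) (s : R) : Prop :=
  inS theta s /\ Rfloor (INR k / theta) * theta <= s <= INR k.

Fixpoint diffs (l : list R) : list R :=
  match l with
  | x :: ((y :: _) as t) => (y - x) :: diffs t
  | _ => nil
  end.

(* Both windows are reflected by an affine map s |-> c - s whose centre is a
   point of S(theta): c = p + q theta with p = floor(k theta), q = k for N^(-)_k,
   and p = k, q = floor(k/theta) for N^(+)_k.  If s = i + j theta lies in the
   window, then i <= p and j <= q (for N^(-)_k: j theta <= s <= k theta and i is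
   an integer <= k theta; symmetrically for N^(+)_k), so c - s = (p - i) +
   (q - j) theta is again in S(theta), and the window bounds are exchanged by
   the reflection.

   The palindrome statement is a general fact about lists: if a strictly
   increasing list l is closed under s |-> c - s, then reversing and reflecting
   l gives back l (a strictly sorted list is determined by its elements), and
   since reflection negates gaps and reversal reverses and negates them, the
   gap sequence of l equals its own reverse. *)
From Pilot Require Import Defs.
From Stdlib Require Import Reals List Sorting.Sorted Lra Lia ZArith.
Import Pilot.Defs.  (* [Nminus] must refer to Defs, not to the BinNat notation *)
Open Scope R_scope.

Lemma Rfloor_above_nat (n : nat) (x : R) :
  INR n <= x -> exists m : nat, (n <= m)%nat /\ Rfloor x = INR m.
Proof.
  intros Hnx.
  destruct (base_Int_part x) as [Hfloor_le Hfloor_gt].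
  assert (Hn : (Z.of_nat n <= Int_part x)%Z).
  { destruct (Z_le_gt_dec (Z.of_nat n) (Int_part x)) as [Hle|Hgt]; [exact Hle|].
    assert (Hsucc : IZR (Int_part x + 1) <= IZR (Z.of_nat n)) by (apply IZR_le; lia).
    rewrite plus_IZR, <- INR_IZR_INZ in Hsucc. lra. }
  exists (Z.to_nat (Int_part x)). split; [lia|].
  unfold Rfloor. rewrite INR_IZR_INZ, Z2Nat.id by lia. reflexivity.
Qed.

Lemma inS_reflect (theta : R) (p q i j : nat) :
  (i <= p)%nat -> (j <= q)%nat ->
  inS theta (INR p + INR q * theta - (INR i + INR j * theta)).
Proof.
  intros Hip Hjq. exists (p - i)%nat, (q - j)%nat.
  rewrite !minus_INR by assumption. ring.
Qed.

Lemma Nminus_reflect (theta : R) (k : nat) (s : R) : 0 < theta ->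
  Nminus theta k s -> Nminus theta k (Rfloor (INR k * theta) + INR k * theta - s).
Proof.
  intros Htheta [[i [j ->]] [Hlow Hhigh]].
  pose proof (pos_INR i). pose proof (pos_INR j).
  assert (Hi : INR i <= INR k * theta) by nra.
  destruct (Rfloor_above_nat i _ Hi) as [m [Him Hm]].
  assert (Hj : (j <= k)%nat) by (apply INR_le; nra).
  split; [|lra].
  rewrite Hm. exact (inS_reflect theta m k i j Him Hj).
Qed.

Lemma Nplus_reflect (theta : R) (k : nat) (s : R) : 0 < theta ->
  Nplus theta k s -> Nplus theta k (Rfloor (INR k / theta) * theta + INR k - s).
Proof.
  intros Htheta [[i [j ->]] [Hlow Hhigh]].
  pose proof (pos_INR i). pose proof (pos_INR j).
  assert (Hj : INR j <= INR k / theta).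
  { apply Rmult_le_reg_r with theta; [lra|].
    unfold Rdiv. rewrite Rmult_assoc, Rinv_l by lra. lra. }
  destruct (Rfloor_above_nat j _ Hj) as [m [Hjm Hm]].
  assert (Hi : (i <= k)%nat) by (apply INR_le; nra).
  split; [|lra].
  rewrite Hm.
  replace (INR m * theta + INR k - (INR i + INR j * theta))
    with (INR k + INR m * theta - (INR i + INR j * theta)) by ring.
  exact (inS_reflect theta k m i j Hi Hjm).
Qed.

Lemma StronglySorted_Rlt_unique (l1 l2 : list R) :
  StronglySorted Rlt l1 -> StronglySorted Rlt l2 ->
  (forall x, In x l1 <-> In x l2) -> l1 = l2.
Proof.
  revert l2; induction l1 as [|a l1 IH]; intros [|b l2] S1 S2 E.
  - reflexivity.
  - exfalso. apply (proj2 (E b)). now left.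
  - exfalso. apply (proj1 (E a)). now left.
  - apply StronglySorted_inv in S1 as [S1 F1].
    apply StronglySorted_inv in S2 as [S2 F2].
    rewrite Forall_forall in F1, F2.
    (* each head is the minimum of the common set *)
    assert (Hab : a = b).
    { destruct (proj1 (E a) (or_introl eq_refl)) as [->|Ha]; [reflexivity|].
      destruct (proj2 (E b) (or_introl eq_refl)) as [->|Hb]; [reflexivity|].
      specialize (F1 b Hb). specialize (F2 a Ha). lra. }
    subst b. f_equal. apply IH; [assumption|assumption|].
    intros x; split; intros Hx.
    + destruct (proj1 (E x) (or_intror Hx)) as [<-|Hx']; [|exact Hx'].
      specialize (F1 a Hx). lra.
    + destruct (proj2 (E x) (or_intror Hx)) as [<-|Hx']; [|exact Hx'].
      specialize (F2 a Hx). lra.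
Qed.

Lemma StronglySorted_Rlt_snoc (l : list R) (x : R) :
  StronglySorted Rlt l -> Forall (fun y => y < x) l ->
  StronglySorted Rlt (l ++ x :: nil).
Proof.
  induction l as [|a l IH]; intros S F; simpl.
  - repeat constructor.
  - apply StronglySorted_inv in S as [S Fa]. inversion F; subst.
    constructor; [now apply IH|].
    apply Forall_app; split; [exact Fa|now constructor].
Qed.

Lemma StronglySorted_Rlt_rev_reflect (c : R) (l : list R) :
  StronglySorted Rlt l -> StronglySorted Rlt (rev (map (fun x => c - x) l)).
Proof.
  induction l as [|a l IH]; intros S; simpl.
  - constructor.
  - apply StronglySorted_inv in S as [S Fa].
    apply StronglySorted_Rlt_snoc; [now apply IH|].
    apply Forall_rev, Forall_map. eapply Forall_impl; [|exact Fa].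
    intros y Hy; simpl; lra.
Qed.

Lemma diffs_snoc (m : list R) (b a : R) :
  diffs ((m ++ b :: nil) ++ a :: nil) = diffs (m ++ b :: nil) ++ (a - b) :: nil.
Proof.
  induction m as [|x [|y m] IH]; [reflexivity|reflexivity|].
  change (((x :: y :: m) ++ b :: nil) ++ a :: nil)
    with (x :: ((y :: m) ++ b :: nil) ++ a :: nil).
  change ((x :: y :: m) ++ b :: nil) with (x :: (y :: m) ++ b :: nil).
  simpl in IH |- *. rewrite IH. reflexivity.
Qed.

Lemma diffs_rev (l : list R) : rev (diffs l) = map Ropp (diffs (rev l)).
Proof.
  induction l as [|a [|b t] IH]; [reflexivity|reflexivity|].
  change (rev (a :: b :: t)) with ((rev t ++ b :: nil) ++ a :: nil).
  rewrite diffs_snoc.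
  change (rev (diffs (a :: b :: t))) with (rev (diffs (b :: t)) ++ (b - a) :: nil).
  rewrite IH, map_app. simpl. do 2 f_equal. ring.
Qed.

Lemma diffs_reflect (c : R) (l : list R) :
  diffs (map (fun x => c - x) l) = map Ropp (diffs l).
Proof.
  induction l as [|a [|b t] IH]; [reflexivity|reflexivity|].
  simpl in IH |- *. rewrite IH. f_equal. ring.
Qed.

Lemma map_Ropp_involutive (l : list R) : map Ropp (map Ropp l) = l.
Proof.
  rewrite map_map. etransitivity; [|apply map_id].
  apply map_ext. intros; ring.
Qed.

Lemma diffs_palindrome (c : R) (l : list R) : StronglySorted Rlt l ->
  (forall s, In s l -> In (c - s) l) -> rev (diffs l) = diffs l.
Proof.
  intros S C.
  set (m := map (fun x => c - x) l).
  assert (Hrev_m : rev m = l).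
  { apply StronglySorted_Rlt_unique;
      [now apply StronglySorted_Rlt_rev_reflect|exact S|].
    intros x; unfold m; rewrite <- in_rev, in_map_iff; split.
    - intros [y [<- Hy]]. now apply C.
    - intros Hx. exists (c - x); split; [ring|now apply C]. }
  (* computing rev (diffs m) in two ways *)
  assert (Hgaps : rev (map Ropp (diffs l)) = map Ropp (diffs l)).
  { unfold m in Hrev_m |- *.
    rewrite <- (diffs_reflect c l) at 1; rewrite diffs_rev, Hrev_m. reflexivity. }
  rewrite <- (map_Ropp_involutive (diffs l)) at 2.
  rewrite <- Hgaps, map_rev, map_Ropp_involutive. reflexivity.
Qed.

Lemma enumeration_palindrome (P : R -> Prop) (c : R) (l : list R) :
  (forall s, P s -> P (c - s)) -> StronglySorted Rlt l ->
  (forall s, In s l <-> P s) -> rev (diffs l) = diffs l.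
Proof.
  intros HP S E. apply (diffs_palindrome c); [exact S|].
  intros s Hs. apply E, HP, E, Hs.
Qed.

Theorem lemma9 (theta : R) (Hirr : irrational theta)
  (H1 : 1 < theta) (H2 : theta < 2) (k : nat) (Hk : (1 <= k)%nat) :
  (forall s, Nminus theta k s ->
     Nminus theta k (Rfloor (INR k * theta) + INR k * theta - s)) /\
  (forall s, Nplus theta k s ->
     Nplus theta k (Rfloor (INR k / theta) * theta + INR k - s)) /\
  (forall l : list R, StronglySorted Rlt l ->
     (forall s, In s l <-> Nminus theta k s) -> rev (diffs l) = diffs l) /\
  (forall l : list R, StronglySorted Rlt l ->
     (forall s, In s l <-> Nplus theta k s) -> rev (diffs l) = diffs l).
Proof.
  assert (Htheta : 0 < theta) by lra.
  pose proof (fun s => Nminus_reflect theta k s Htheta) as Hminus.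
  pose proof (fun s => Nplus_reflect theta k s Htheta) as Hplus.
  split; [exact Hminus|]. split; [exact Hplus|]. split.
  - intros l. exact (enumeration_palindrome _ _ l Hminus).
  - intros l. exact (enumeration_palindrome _ _ l Hplus).
Qed.
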